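(* Let $\bm\sigma=\sigma_1\bm e_1+\dots+\sigma_r\bm e_r\in\mathbb{Z}^r$ be a changemaker vector with non-trivial stable coefficients (i.e. $\sigma_r\ge2$), and let $L=\langle\bm\sigma\rangle^\perp\subseteq\mathbb{Z}^r$. If $L$ admits an obtuse superbase, then $L$ admits an obtuse superbase $B$ (possibly after permuting basis vectors $\bm e_i$ with equal coefficients $\sigma_i$) such that $-\bm e_k+\bm e_{k-1}\in B$ for every $k$ with $\sigma_k=\sigma_{k-1}$.
   Context: $\mathbb{Z}^r$ has the standard pairing. A changemaker vector is $\bm\sigma=\sum\sigma_i\bm e_i$ (in some orthonormal basis) with $\sigma_1=1$ and $\sigma_{i-1}\le\sigma_i\le1+\sigma_1+\dots+\sigma_{i-1}$; its stable coefficients are the $\sigma_i\ge2$. An obtuse superbase of a rank-$k$ lattice $L$ is a spanning set $\{v_0,\dots,v_k\}$ with $v_i\cdot v_j\le0$ for $i\ne j$ and $\sum v_i=0$. *)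

From mathcomp Require Import all_boot all_order all_algebra all_fingroup.
Set Implicit Arguments. Unset Strict Implicit. Unset Printing Implicit Defensive.
Import Order.TTheory GRing.Theory Num.Theory.
Local Open Scope ring_scope.

Definition dotZ (r : nat) (u v : 'rV[int]_r) : int := \sum_(i < r) u 0 i * v 0 i.

Definition eZ (r : nat) (i : 'I_r) : 'rV[int]_r := delta_mx 0 i.

(* changemaker vector (indices shifted: paper's sigma_{i+1} is s 0 i) *)
Definition changemaker (r : nat) (s : 'rV[int]_r) : Prop :=
  (forall i : 'I_r, val i = 0%N -> s 0 i = 1) /\
  (forall i j : 'I_r, val j = (val i).+1 ->
      s 0 i <= s 0 j /\ s 0 j <= 1 + \sum_(k < r | (val k < val j)%N) s 0 k).

Definition orth_lattice (r : nat) (s : 'rV[int]_r) : pred 'rV[int]_r :=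
  fun x => dotZ x s == 0.

Definition obtuse_superbase (r k : nat) (L : pred 'rV[int]_r)
    (v : 'I_k.+1 -> 'rV[int]_r) : Prop :=
  [/\ (forall i, v i \in L),
      (forall x, x \in L -> exists c : 'I_k.+1 -> int, x = \sum_(i < k.+1) c i *: v i),
      (forall i j, i != j -> dotZ (v i) (v j) <= 0)
    & \sum_(i < k.+1) v i = 0].

(* Since the changemaker coefficients are positive, L = <sigma>^perp has no
   vector of norm 1, and then every norm-2 vector of L is a subset sum
   u = sum_(i in S) v_i of any obtuse superbase v.  The superbase splits along
   the cut between S and its complement, of total weight
   - sum_(i in S, j notin S) v_i.v_j = |u|^2 = 2; exchanging at most three
   vectors next to the cut gives a new obtuse superbase containing -u that
   keeps every v_i with v_i.u >= 0, except one prescribed s with v_s.u >= 1.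
   Apply this to u = e_(m+1) - e_m for the ties sigma_m = sigma_(m+1), in
   increasing order of m: the earlier e_i - e_(i+1) pair to 0 with u, except
   e_(m-1) - e_m, which pairs to 1 and is avoided as s.  No permutation of the
   coordinates is needed. *)

From HB Require Import structures.
From mathcomp Require Import all_boot all_order all_algebra all_fingroup.
From mathcomp Require Import zify.
Set Implicit Arguments. Unset Strict Implicit. Unset Printing Implicit Defensive.
Import Order.TTheory GRing.Theory Num.Theory.
Local Open Scope ring_scope.

Section DotZ.
Variable r : nat.
Implicit Types (u v w x : 'rV[int]_r) (i j : 'I_r).

Lemma dotZC u v : dotZ u v = dotZ v u.
Proof. by apply: eq_bigr => i _; rewrite mulrC. Qed.

Lemma dotZ0l u : dotZ 0 u = 0.
Proof. by rewrite /dotZ big1 // => i _; rewrite mxE mul0r. Qed.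

Lemma dotZDl u v w : dotZ (u + v) w = dotZ u w + dotZ v w.
Proof. by rewrite /dotZ -big_split; apply: eq_bigr => i _; rewrite mxE mulrDl. Qed.

Lemma dotZDr u v w : dotZ u (v + w) = dotZ u v + dotZ u w.
Proof. by rewrite dotZC dotZDl !(dotZC u). Qed.

Lemma dotZZl a u v : dotZ (a *: u) v = a * dotZ u v.
Proof. by rewrite /dotZ mulr_sumr; apply: eq_bigr => i _; rewrite mxE mulrA. Qed.

Lemma dotZNl u v : dotZ (- u) v = - dotZ u v.
Proof. by rewrite -scaleN1r dotZZl mulN1r. Qed.

Lemma dotZNr u v : dotZ u (- v) = - dotZ u v.
Proof. by rewrite dotZC dotZNl dotZC. Qed.

Lemma dotZBl u v w : dotZ (u - v) w = dotZ u w - dotZ v w.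
Proof. by rewrite dotZDl dotZNl. Qed.

Lemma dotZBr u v w : dotZ u (v - w) = dotZ u v - dotZ u w.
Proof. by rewrite dotZDr dotZNr. Qed.

Lemma dotZ_suml (I : finType) (P : pred I) (F : I -> 'rV[int]_r) w :
  dotZ (\sum_(i | P i) F i) w = \sum_(i | P i) dotZ (F i) w.
Proof.
by elim/big_rec2: _ => [|i y1 y2 _ <-]; rewrite ?dotZ0l ?dotZDl.
Qed.

Lemma dotZ_sumr (I : finType) (P : pred I) (F : I -> 'rV[int]_r) w :
  dotZ w (\sum_(i | P i) F i) = \sum_(i | P i) dotZ w (F i).
Proof. by rewrite dotZC dotZ_suml; apply: eq_bigr => i _; rewrite dotZC. Qed.

Lemma dotZ_ge0 x : 0 <= dotZ x x.
Proof. by apply: sumr_ge0 => i _; rewrite -expr2 sqr_ge0. Qed.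

Lemma dotZ_eq0 x : dotZ x x = 0 -> x = 0.
Proof.
move/psumr_eq0P=> x0; apply/rowP => i; rewrite mxE.
by apply/eqP; rewrite -sqrf_eq0 expr2 x0 // => j _; rewrite -expr2 sqr_ge0.
Qed.

Lemma dotZ_eZl i x : dotZ (eZ i) x = x 0 i.
Proof.
rewrite /dotZ (bigD1 i) //= big1 => [|j /negbTE ji]; first by rewrite mxE !eqxx mul1r addr0.
by rewrite mxE ji andbF mul0r.
Qed.

Lemma dotZ_eZ i j : dotZ (eZ i) (eZ j) = (i == j)%:R.
Proof. by rewrite dotZ_eZl mxE eqxx eq_sym. Qed.

End DotZ.

Lemma orth_lattice_submod_closed r (s : 'rV[int]_r) : submod_closed (orth_lattice s).
Proof.
split=> [|a x y]; rewrite !unfold_in /= ?dotZ0l //.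
by rewrite dotZDl dotZZl => /eqP-> /eqP->; rewrite mulr0 addr0.
Qed.

HB.instance Definition _ r (s : 'rV[int]_r) :=
  GRing.isSubmodClosed.Build int 'rV[int]_r (orth_lattice s) (orth_lattice_submod_closed s).

Lemma changemaker_gt0 n (s : 'rV[int]_n.+1) : changemaker s -> forall i, 0 < s 0 i.
Proof.
case=> s0 s_incr [m lt_m_n]; elim: m lt_m_n => [|m IHm] lt_m_n; first by rewrite s0.
have lt_m_n' := ltnW lt_m_n.
have [le_s _] := s_incr (Ordinal lt_m_n') (Ordinal lt_m_n) erefl.
exact: lt_le_trans (IHm lt_m_n') le_s.
Qed.

Lemma orth_lattice_norm_neq1 r (s : 'rV[int]_r) x :
  (forall i, s 0 i != 0) -> x \in orth_lattice s -> dotZ x x != 1.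
Proof.
move=> s_neq0 xL; apply/eqP => xx1.
have [k xk] : exists k, x 0 k != 0.
  case: (pickP [pred k | x 0 k != 0]) => [k xk|x0]; first by exists k.
  by move: xx1; rewrite /dotZ big1 // => i _; move/negbFE/eqP: (x0 i) => ->; rewrite mul0r.
have sq_ge0 i : 0 <= x 0 i * x 0 i by rewrite -expr2 sqr_ge0.
have rest0 : \sum_(i | i != k) x 0 i * x 0 i = 0.
  have xk1 : 1 <= x 0 k * x 0 k by rewrite -expr2; move: xk; nia.
  have : 0 <= \sum_(i | i != k) x 0 i * x 0 i by apply: sumr_ge0 => i _; apply: sq_ge0.
  move: xx1 xk1; rewrite /dotZ (bigD1 k) //=.
  by set p := x 0 k * x 0 k; set q := \sum_(i | _) _; lia.
have xi0 i : i != k -> x 0 i = 0.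
  by move=> ik; apply/eqP; rewrite -sqrf_eq0 expr2 (psumr_eq0P (fun j _ => sq_ge0 j) rest0).
move: xL; rewrite unfold_in /= /dotZ (bigD1 k) //= big1 => [|i /xi0->]; last first.
  by rewrite mul0r.
by rewrite addr0 mulf_eq0 (negbTE xk) (negbTE (s_neq0 k)).
Qed.

Section IntegerSpan.
Variables (r k : nat) (w : 'I_k -> 'rV[int]_r).

Definition zspan x := exists c : 'I_k -> int, x = \sum_(i < k) c i *: w i.

Lemma zspan_gen i : zspan (w i).
Proof.
exists (fun j => (j == i)%:R); rewrite (bigD1 i) //= eqxx scale1r big1 ?addr0 //.
by move=> j /negbTE ->; rewrite scale0r.
Qed.

Lemma zspanD x y : zspan x -> zspan y -> zspan (x + y).
Proof.
move=> [c ->] [d ->]; exists (fun i => c i + d i).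
by rewrite -big_split; apply: eq_bigr => i _; rewrite scalerDl.
Qed.

Lemma zspanZ a x : zspan x -> zspan (a *: x).
Proof.
move=> [c ->]; exists (fun i => a * c i).
by rewrite scaler_sumr; apply: eq_bigr => i _; rewrite scalerA.
Qed.

Lemma zspanN x : zspan x -> zspan (- x).
Proof. by rewrite -scaleN1r; apply: zspanZ. Qed.

Lemma zspan_sum (I : finType) (P : pred I) (F : I -> 'rV[int]_r) :
  (forall i, P i -> zspan (F i)) -> zspan (\sum_(i | P i) F i).
Proof.
move=> spanF; elim/big_rec: _ => [|i x Pi]; last by apply: zspanD; apply: spanF.
by exists (fun=> 0); rewrite big1 // => i _; rewrite scale0r.
Qed.

End IntegerSpan.

Lemma zspan_trans r k k' (w : 'I_k -> 'rV[int]_r) (v : 'I_k' -> 'rV[int]_r) x :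
  (forall i, zspan w (v i)) -> zspan v x -> zspan w x.
Proof. by move=> span_v [c ->]; apply: zspan_sum => i _; apply/zspanZ/span_v. Qed.

Lemma sumr_shift (V : lmodType int) k (v : 'I_k -> V) (c : 'I_k -> int) b :
  \sum_(i < k) v i = 0 -> \sum_(i < k) (c i + b) *: v i = \sum_(i < k) c i *: v i.
Proof.
move=> v0; under eq_bigr do rewrite scalerDl.
by rewrite big_split /= -scaler_sumr v0 scaler0 addr0.
Qed.

Lemma sumr_update (V : zmodType) (I : finType) (w v : I -> V) (C : seq I) :
  uniq C -> (forall i, i \notin C -> w i = v i) ->
  \sum_(i <- C) w i = \sum_(i <- C) v i -> \sum_i w i = \sum_i v i.
Proof.
move=> C_uniq wv wvC; rewrite (bigID (mem C)) [RHS](bigID (mem C)) /=.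
by rewrite -!big_uniq // wvC; congr (_ + _); apply: eq_bigr.
Qed.

Lemma obtuse_update r (I : finType) (w : I -> 'rV[int]_r) (C : seq I) :
  (forall i j, i != j -> i \notin C -> j \notin C -> dotZ (w i) (w j) <= 0) ->
  (forall c j, c \in C -> j != c -> dotZ (w c) (w j) <= 0) ->
  forall i j, i != j -> dotZ (w i) (w j) <= 0.
Proof.
move=> outC inC i j ij; have [iC|iNC] := boolP (i \in C); first by rewrite inC // eq_sym.
have [jC|jNC] := boolP (j \in C); first by rewrite dotZC inC.
exact: outC.
Qed.

Lemma nposr_sum_eq0P (R : numDomainType) (I : finType) (P : pred I) (F : I -> R) :
  (forall i, P i -> F i <= 0) -> \sum_(i | P i) F i = 0 -> forall i, P i -> F i = 0.
Proof.
move=> F_le0 F0 i Pi; apply/eqP; rewrite -oppr_eq0; apply/eqP; move: i Pi.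
by apply: psumr_eq0P => [i /F_le0|]; rewrite ?oppr_ge0 // sumrN F0 oppr0.
Qed.

Lemma sumr_ge1_exists (I : finType) (P : pred I) (F : I -> int) :
  1 <= \sum_(i | P i) F i -> exists2 i, P i & 1 <= F i.
Proof.
move=> sum_ge1; case: (pickP [pred i | P i && (1 <= F i)]) => [i /andP[]|none].
  by exists i.
suff : \sum_(i | P i) F i <= 0 by move: sum_ge1; set x := \sum_(i | _) _; lia.
by apply: sumr_le0 => i Pi; have := none i; rewrite /= Pi /=; lia.
Qed.

Lemma sumr_eqN2_cases (I : finType) (P : pred I) (b : I -> int) t :
  (forall i, P i -> b i <= 0) -> \sum_(i | P i) b i = -2 -> P t -> b t <= -1 ->
  (b t = -2 /\ forall i, P i -> i != t -> b i = 0) \/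
  exists t', [/\ P t', t' != t, b t = -1, b t' = -1
                 & forall i, P i -> i != t -> i != t' -> b i = 0].
Proof.
move=> b_le0 sum2 Pt bt_le; rewrite (bigD1 t) //= in sum2.
have rest_le0 : \sum_(i | P i && (i != t)) b i <= 0.
  by apply: sumr_le0 => i /andP[/b_le0].
move: sum2 rest_le0; set rest := \sum_(i | _) _ => sum2 rest_le0.
have [bt2|bt1] : b t = -2 \/ b t = -1 by lia.
  left; split=> // i Pi it; apply: (nposr_sum_eq0P (P := fun i => P i && (i != t))).
  - by move=> j /andP[/b_le0].
  - by rewrite -/rest; lia.
  - by rewrite Pi it.
have [t' /andP[Pt' t't] bt'_le] : exists2 t', P t' && (t' != t) & 1 <= - b t'.
  by apply: sumr_ge1_exists; rewrite sumrN -/rest; lia.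
move: sum2; rewrite /rest (bigD1 t') /= ?Pt' ?t't //.
have : \sum_(i | (P i && (i != t)) && (i != t')) b i <= 0.
  by apply: sumr_le0 => i /andP[/andP[/b_le0]].
set rest' := \sum_(i | _) _ => rest'_le0 sum2.
have [bt'1 rest'0] : b t' = -1 /\ rest' = 0 by lia.
right; exists t'; split=> // i Pi it it'; apply: (nposr_sum_eq0P _ rest'0).
  by move=> j /andP[/andP[/b_le0]].
by rewrite Pi it it'.
Qed.

Section Superbase.
Variables (r k : nat) (sg : 'rV[int]_r) (v : 'I_k.+1 -> 'rV[int]_r).
Local Notation L := (orth_lattice sg).
Hypothesis v_sb : obtuse_superbase L v.

Lemma superbase_mem i : v i \in L. Proof. by case: v_sb. Qed.

Lemma superbase_obtuse i j : i != j -> dotZ (v i) (v j) <= 0.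
Proof. by case: v_sb => _ _ + _; apply. Qed.

Lemma superbase_sum0 : \sum_(i < k.+1) v i = 0. Proof. by case: v_sb. Qed.

Lemma superbase_span x : x \in L -> zspan v x.
Proof. by case: v_sb => _ + _ _; apply. Qed.

Lemma superbase_subset_sum_mem (S : {set 'I_k.+1}) : \sum_(i in S) v i \in L.
Proof. by apply: rpred_sum => i _; apply: superbase_mem. Qed.

Lemma obtuse_comb_pairing_ge0 (d : 'I_k.+1 -> int) (S : {set 'I_k.+1}) :
  (forall i, i \in S -> d i = 0) -> (forall i, d i <= 0) ->
  0 <= dotZ (\sum_(i < k.+1) d i *: v i) (\sum_(j in S) v j).
Proof.
move=> dS d_le0; rewrite dotZ_suml; apply: sumr_ge0 => i _; rewrite dotZZl.
have [iS|iNS] := boolP (i \in S); first by rewrite dS ?mul0r.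
rewrite mulr_le0 // dotZ_sumr; apply: sumr_le0 => j jS; apply: superbase_obtuse.
by apply: contraNneq iNS => ->.
Qed.

(* Peel off the top level set of the (shifted, nonnegative) coefficients: the
   remainder pairs nonnegatively with it, so a norm-2 vector cannot split
   into two nonzero parts. *)
Lemma norm2_subset_sum x : (forall y, y \in L -> dotZ y y != 1) ->
  x \in L -> dotZ x x = 2 -> exists S : {set 'I_k.+1}, x = \sum_(i in S) v i.
Proof.
move=> no_norm1 xL xx2.
suff levels K (c : 'I_k.+1 -> int) : (forall i, 0 <= c i <= K%:Z) ->
    x = \sum_(i < k.+1) c i *: v i -> exists S : {set 'I_k.+1}, x = \sum_(i in S) v i.
  have [c xc] := superbase_span xL; pose b := \sum_i `|c i|%N.
  have ci_le i : (`|c i| <= b)%N by rewrite /b (bigD1 i) //= leq_addr.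
  apply: (levels (b + b)%N (fun i => c i + b%:Z)); first by move=> i; have := ci_le i; lia.
  by rewrite sumr_shift // superbase_sum0.
elim: K c => [|K IHK] c c_bnd xc.
  move: xx2; rewrite xc big1 ?dotZ0l // => i _.
  by rewrite (_ : c i = 0) ?scale0r //; have := c_bnd i; lia.
pose S := [set i | c i == K.+1%:Z]; pose c1 i := c i - (i \in S)%:R.
pose x1 := \sum_(i < k.+1) c1 i *: v i; pose xS := \sum_(i in S) v i.
have x_split : x = x1 + xS.
  rewrite xc /x1 /xS (big_mkcond (mem S)) -big_split /=; apply: eq_bigr => i _.
  by rewrite /c1; case: (i \in S); rewrite ?subr0 ?addr0 // scalerBl scale1r subrK.
have x1L : x1 \in L by apply: rpred_sum => i _; apply/rpredZ/superbase_mem.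
have cross_ge0 : 0 <= dotZ x1 xS.
  rewrite /x1 -(sumr_shift c1 (- K%:Z) superbase_sum0).
  apply: obtuse_comb_pairing_ge0 => i; rewrite /c1 ?inE.
    by move/eqP->; rewrite eqxx; lia.
  by have := c_bnd i; case: eqP; lia.
have norm_x : dotZ x x = dotZ x1 x1 + 2 * dotZ x1 xS + dotZ xS xS.
  by rewrite x_split !dotZDl !dotZDr (dotZC xS x1) mulr2n mulrDl mul1r !addrA.
have /eqP x1_neq1 := no_norm1 _ x1L.
have /eqP xS_neq1 := no_norm1 _ (superbase_subset_sum_mem S).
have [/dotZ_eq0 xS0|/dotZ_eq0 x10] : dotZ xS xS = 0 \/ dotZ x1 x1 = 0.
  by move: norm_x xS_neq1 (dotZ_ge0 x1) (dotZ_ge0 xS); rewrite xx2 -/xS; lia.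
  apply: (IHK c1); last by rewrite x_split xS0 addr0.
  by move=> i; rewrite /c1 inE; have := c_bnd i; case: eqP; lia.
by exists S; rewrite x_split x10 add0r.
Qed.

Section Exchange.
Variable S : {set 'I_k.+1}.
Local Notation u := (\sum_(i in S) v i).
Hypothesis u_norm2 : dotZ u u = 2.
Local Notation a i := (dotZ (v i) u).
Local Notation q i j := (dotZ (v i) (v j)).

Lemma sum_notin_subset : \sum_(i | i \notin S) v i = - u.
Proof.
by apply: (addrI u); rewrite subrr -[RHS]superbase_sum0 [RHS](bigID (mem S)).
Qed.

Lemma pairing_notin_sum i : a i = - \sum_(j | j \notin S) q i j.
Proof. by rewrite -dotZ_sumr sum_notin_subset dotZNr opprK. Qed.

Lemma pairing_ge0 i : i \in S -> 0 <= a i.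
Proof.
move=> iS; rewrite pairing_notin_sum oppr_ge0; apply: sumr_le0 => j jNS.
by apply: superbase_obtuse; apply: contraNneq jNS => <-.
Qed.

Lemma pairing_le_q j i : j \notin S -> i \in S -> a j <= q j i.
Proof.
move=> jNS iS; rewrite dotZ_sumr (bigD1 i) //= gerDl; apply: sumr_le0 => l /andP[lS _].
by apply: superbase_obtuse; apply: contraNneq jNS => ->.
Qed.

Lemma pairing_le0 j : j \notin S -> a j <= 0.
Proof.
move=> jNS; rewrite dotZ_sumr; apply: sumr_le0 => l lS.
by apply: superbase_obtuse; apply: contraNneq jNS => ->.
Qed.

Lemma pairing_eq0_q j i : j \notin S -> a j = 0 -> i \in S -> q j i = 0.
Proof.
move=> jNS aj0; rewrite dotZ_sumr in aj0; apply: (nposr_sum_eq0P _ aj0) => l lS.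
by apply: superbase_obtuse; apply: contraNneq jNS => ->.
Qed.

Lemma sum_pairing_in : \sum_(i in S) a i = 2.
Proof. by rewrite -dotZ_suml. Qed.

Lemma sum_pairing_notin : \sum_(i | i \notin S) a i = -2.
Proof. by rewrite -dotZ_suml sum_notin_subset dotZNl u_norm2. Qed.

Lemma exchange_span (w : 'I_k.+1 -> 'rV[int]_r) s t :
  s \in S -> w t = - u -> (forall i, i \in S -> i != s -> w i = v i) ->
  (forall o, o != s -> o != t -> zspan w (v o)) -> forall x, x \in L -> zspan w x.
Proof.
move=> sS wt wS span_o x /superbase_span; apply: zspan_trans.
have span_s : zspan w (v s).
  have -> : v s = - w t - \sum_(i in S | i != s) w i.
    have wSv : \sum_(i in S | i != s) w i = \sum_(i in S | i != s) v i.
      by apply: eq_bigr => i /andP[]; exact: wS.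
    by rewrite wt opprK (bigD1 s) //= wSv addrK.
  by apply: zspanD; apply: zspanN; [|apply: zspan_sum => i _]; apply: zspan_gen.
have span_nt o : o != t -> zspan w (v o).
  by case: (eqVneq o s) => [-> //|os ot]; apply: span_o.
move=> i; case: (eqVneq i t) => [->|]; last exact: span_nt.
have -> : v t = - \sum_(i | i != t) v i.
  by apply/eqP; rewrite -addr_eq0 -[X in _ == X]superbase_sum0 [X in _ == X](bigD1 t).
by apply: zspanN; apply: zspan_sum => j; apply: span_nt.
Qed.

Section OneVertexSide.
Variables s t : 'I_k.+1.
Hypotheses (sS : s \in S) (tNS : t \notin S) (at2 : a t = -2).
Hypothesis a_eq0 : forall o, o \notin S -> o != t -> a o = 0.

Let st : s != t. Proof. by apply: contraNneq tNS => <-. Qed.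

Let q_eq0 i o : i \in S -> o \notin S -> o != t -> q i o = 0.
Proof. by move=> iS oNS ot; rewrite dotZC (pairing_eq0_q oNS) ?a_eq0. Qed.

Let a_in i : i \in S -> a i = - q i t.
Proof.
move=> iS; rewrite pairing_notin_sum (bigD1 t) //= big1 ?addr0 // => o /andP[oNS ot].
exact: q_eq0.
Qed.

Let w i := if i == t then - u else if i == s then v s + v t + u else v i.

Let w_t : w t = - u. Proof. by rewrite /w eqxx. Qed.
Let w_s : w s = v s + v t + u. Proof. by rewrite /w (negbTE st) eqxx. Qed.
Let w_other o : o != t -> o != s -> w o = v o.
Proof. by rewrite /w => /negbTE-> /negbTE->. Qed.

Let w_pairing_ge0 j : j != t -> 0 <= dotZ (w j) u.
Proof.
case: (eqVneq j s) => [-> _|js jt].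
  by rewrite w_s !dotZDl u_norm2 at2 addrK pairing_ge0.
rewrite w_other //; have [jS|jNS] := boolP (j \in S); first exact: pairing_ge0.
by rewrite a_eq0.
Qed.

Let w_obtuse i j : i != j -> dotZ (w i) (w j) <= 0.
Proof.
apply: (obtuse_update (C := [:: t; s])) => {i j} [i j ij|c j].
  rewrite !inE => /norP[it i_s] /norP[jt js].
  by rewrite !w_other // superbase_obtuse.
have w_t_le0 o : o != t -> dotZ (w t) (w o) <= 0.
  by move=> ot; rewrite w_t dotZNl dotZC oppr_le0 w_pairing_ge0.
rewrite !inE => /orP[]/eqP-> jc; first exact: w_t_le0.
case: (eqVneq j t) => [->|jt]; first by rewrite dotZC w_t_le0.
have sj : s != j by rewrite eq_sym.
have tj : t != j by rewrite eq_sym.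
rewrite w_s w_other // !dotZDl (dotZC u).
have [jS|jNS] := boolP (j \in S).
  by rewrite a_in // (dotZC (v j)) addrK superbase_obtuse.
by rewrite a_eq0 // addr0; have := superbase_obtuse sj; have := superbase_obtuse tj; lia.
Qed.

Lemma exchange_one_vertex_side : exists w : 'I_k.+1 -> 'rV[int]_r,
  [/\ obtuse_superbase L w, w t = - u & forall i, i != s -> i != t -> w i = v i].
Proof.
exists w; split=> // [|i i_s it]; last exact: w_other.
split=> //.
- move=> i; rewrite /w; case: ifP => _; first by rewrite rpredN superbase_subset_sum_mem.
  by case: ifP => _; rewrite ?rpredD ?superbase_subset_sum_mem ?superbase_mem.
- apply: (exchange_span sS w_t) => [i iS i_s|o os ot].
    by rewrite w_other //; apply: contraTneq iS => ->.
  by rewrite -(w_other ot os); apply: zspan_gen.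
- rewrite -[RHS]superbase_sum0; apply: (sumr_update (C := [:: t; s])).
  + by rewrite /= inE eq_sym st.
  + by move=> i; rewrite !inE => /norP[]; apply: w_other.
  + by rewrite !big_cons !big_nil w_t w_s !addr0 addrC addrK addrC.
Qed.

End OneVertexSide.

Section TwoVertexSide.
Variables s t t' : 'I_k.+1.
Hypotheses (sS : s \in S) (tNS : t \notin S) (t'NS : t' \notin S) (t't : t' != t).
Hypotheses (qst : q s t <= -1) (at1 : a t = -1) (at'1 : a t' = -1).
Hypothesis a_eq0 : forall o, o \notin S -> o != t -> o != t' -> a o = 0.

Let st : s != t. Proof. by apply: contraNneq tNS => <-. Qed.
Let st' : s != t'. Proof. by apply: contraNneq t'NS => <-. Qed.
Let tt' : t != t'. Proof. by rewrite eq_sym. Qed.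

Let qst1 : q s t = -1.
Proof. by have := pairing_le_q tNS sS; rewrite at1 (dotZC (v t)); lia. Qed.

Let q_t_in o : o \in S -> o != s -> q t o = 0.
Proof.
have rest0 : \sum_(i in S | i != s) q t i = 0.
  by move: at1; rewrite dotZ_sumr (bigD1 s) //= dotZC qst1; set x := \sum_(i | _) _; lia.
move=> oS os; apply: (nposr_sum_eq0P _ rest0); last by rewrite oS os.
by move=> i /andP[iS _]; apply: superbase_obtuse; apply: contraNneq tNS => ->.
Qed.

Let a_in o : o \in S -> a o = - (q o t + q o t').
Proof.
move=> oS; rewrite pairing_notin_sum (bigD1 t) //= (bigD1 t') /= ?t'NS ?t't //.
rewrite big1 ?addr0 // => j /andP[/andP[jNS jt] jt'].
by rewrite dotZC (pairing_eq0_q jNS) ?a_eq0.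
Qed.

Let w i := if i == t then - u else if i == s then v s + v t
  else if i == t' then v t' + u else v i.

Let w_t : w t = - u. Proof. by rewrite /w eqxx. Qed.
Let w_s : w s = v s + v t. Proof. by rewrite /w (negbTE st) eqxx. Qed.
Let w_t' : w t' = v t' + u. Proof. by rewrite /w (negbTE t't) eq_sym (negbTE st') eqxx. Qed.
Let w_other o : o != t -> o != s -> o != t' -> w o = v o.
Proof. by rewrite /w => /negbTE-> /negbTE-> /negbTE->. Qed.

Let w_pairing_ge0 j : j != t -> 0 <= dotZ (w j) u.
Proof.
case: (eqVneq j s) => [-> _|js].
  have := a_in sS; have := superbase_obtuse st'; rewrite w_s dotZDl; lia.
case: (eqVneq j t') => [-> _|jt' jt]; first by rewrite w_t' dotZDl u_norm2 at'1.
rewrite w_other //; have [jS|jNS] := boolP (j \in S); first exact: pairing_ge0.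
by rewrite a_eq0.
Qed.

Let w_obtuse i j : i != j -> dotZ (w i) (w j) <= 0.
Proof.
apply: (obtuse_update (C := [:: t; s; t'])) => {i j} [i j ij|c j].
  rewrite !inE => /norP[it /norP[i_s it']] /norP[jt /norP[js jt']].
  by rewrite !w_other // superbase_obtuse.
have w_t_le0 o : o != t -> dotZ (w t) (w o) <= 0.
  by move=> ot; rewrite w_t dotZNl dotZC oppr_le0 w_pairing_ge0.
have w_s_t' : dotZ (w s) (w t') <= 0.
  rewrite w_s w_t' !dotZDl !dotZDr (a_in sS) qst1 at1.
  by have := superbase_obtuse tt'; lia.
rewrite !inE => /or3P[]/eqP-> jc; first exact: w_t_le0.
  case: (eqVneq j t) => [->|jt]; first by rewrite dotZC w_t_le0.
  case: (eqVneq j t') => [-> //|jt'].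
  rewrite w_s w_other // dotZDl.
  have sj : s != j by rewrite eq_sym.
  have tj : t != j by rewrite eq_sym.
  by have := superbase_obtuse sj; have := superbase_obtuse tj; lia.
case: (eqVneq j t) => [->|jt]; first by rewrite dotZC w_t_le0.
case: (eqVneq j s) => [->|js]; first by rewrite dotZC.
rewrite w_t' w_other // dotZDl (dotZC u).
have [jS|jNS] := boolP (j \in S).
  by rewrite a_in // (dotZC (v j)) q_t_in // (dotZC (v j)) add0r subrr.
by rewrite a_eq0 // addr0 superbase_obtuse // eq_sym.
Qed.

Lemma exchange_two_vertex_side : exists w : 'I_k.+1 -> 'rV[int]_r,
  [/\ obtuse_superbase L w, w t = - u & forall i, i != s -> i != t -> i != t' -> w i = v i].
Proof.
exists w; split=> // [|i i_s it it']; last exact: w_other.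
split=> //.
- move=> i; rewrite /w; case: ifP => _; first by rewrite rpredN superbase_subset_sum_mem.
  case: ifP => _; [|case: ifP => _];
    by rewrite ?rpredD ?superbase_subset_sum_mem ?superbase_mem.
- apply: (exchange_span sS w_t) => [i iS i_s|o os ot].
    by rewrite w_other //; apply: contraTneq iS => ->.
  case: (eqVneq o t') => [->|ot']; last by rewrite -(w_other ot os ot'); apply: zspan_gen.
  have -> : v t' = w t' + w t by rewrite w_t' w_t addrK.
  by apply: zspanD; apply: zspan_gen.
- rewrite -[RHS]superbase_sum0; apply: (sumr_update (C := [:: t; s; t'])).
  + by rewrite /= !inE negb_or tt' eq_sym st st'.
  + by move=> i; rewrite !inE => /norP[it /norP[]]; apply: w_other.
  + by rewrite !big_cons !big_nil w_t w_s w_t' !addr0 addrC !addrA addrK (addrC (v s)).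
Qed.

End TwoVertexSide.

Lemma superbase_exchange s : 1 <= a s ->
  exists w : 'I_k.+1 -> 'rV[int]_r, [/\ obtuse_superbase L w, exists l, w l = - u
                                  & forall i, i != s -> 0 <= a i -> w i = v i].
Proof.
move=> as1; have sS : s \in S by apply: contraLR as1 => /pairing_le0; lia.
(* t is joined to s across the cut, whose weight 2 is then carried by t
   alone or shared with exactly one other t'. *)
have [t tNS qst] : exists2 t, t \notin S & q s t <= -1.
  have : 1 <= \sum_(j | j \notin S) - q s j by rewrite sumrN -pairing_notin_sum.
  by case/sumr_ge1_exists => t tNS qst; exists t => //; lia.
have at_le : a t <= -1 by rewrite (le_trans (pairing_le_q tNS sS)) // dotZC.
have ge0_pairing_neq_t o : 0 <= a o -> o != t by apply: contraTneq => ->; lia.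
case: (sumr_eqN2_cases pairing_le0 sum_pairing_notin tNS at_le).
  case=> at2 a_eq0; have [w [w_sb wt w_v]] := exchange_one_vertex_side sS tNS at2 a_eq0.
  exists w; split=> //; first by exists t.
  by move=> i i_s ai; apply: w_v => //; apply: ge0_pairing_neq_t.
case=> t' [t'NS t't at1 at'1 a_eq0].
have [w [w_sb wt w_v]] := exchange_two_vertex_side sS tNS t'NS t't qst at1 at'1 a_eq0.
exists w; split=> //; first by exists t.
move=> i i_s ai; apply: w_v => //; first exact: ge0_pairing_neq_t.
by apply: contraTneq ai => ->; lia.
Qed.

Lemma exists_pairing_ge1_neq z : a z <= 1 -> exists2 s, s != z & 1 <= a s.
Proof.
move=> az1; suff : 1 <= \sum_(i in S | i != z) a i.
  by case/sumr_ge1_exists => s /andP[_ sz] as1; exists s.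
have [zS|zNS] := boolP (z \in S).
  move: sum_pairing_in az1; rewrite (bigD1 z) //=.
  by set x := \sum_(i in S | i != z) a i; lia.
rewrite (eq_bigl (mem S)) ?sum_pairing_in // => i /=.
by apply/andb_idr => iS; apply: contraNneq zNS => <-.
Qed.

(* Two superbase vectors equal to x would make x orthogonal to itself. *)
Lemma exists_pairing_ge1_avoid x : dotZ x u <= 1 -> exists2 s, 1 <= a s & v s != x.
Proof.
move=> xu1; have [s1 _ as1] : exists2 s1, s1 \in S & 1 <= a s1.
  by apply: sumr_ge1_exists; rewrite sum_pairing_in.
have [vs1x|] := eqVneq (v s1) x; last by exists s1.
have [s2 s2s1 as2] : exists2 s2, s2 != s1 & 1 <= a s2.
  by apply: exists_pairing_ge1_neq; rewrite vs1x.
exists s2 => //; apply: contraTneq as2 => vs2x.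
have /dotZ_eq0 x0 : dotZ x x = 0.
  by apply/eqP; rewrite eq_le dotZ_ge0 andbT -{1}vs1x -vs2x superbase_obtuse // eq_sym.
by rewrite vs2x x0 dotZ0l.
Qed.

End Exchange.

End Superbase.

Lemma dotZ_eZ_diff r (i1 j1 i j : 'I_r) :
  dotZ (eZ i1 - eZ j1) (eZ i - eZ j) =
  (i1 == i)%:R - (i1 == j)%:R - (j1 == i)%:R + (j1 == j)%:R.
Proof. by rewrite dotZBl !dotZBr !dotZ_eZ opprD opprK addrA. Qed.

Section TieDifferences.
Variables (n : nat) (s : 'rV[int]_n.+1).
Local Notation L := (orth_lattice s).
Hypothesis s_neq0 : forall i, s 0 i != 0.

Definition tie_differences_below (v : 'I_n.+1 -> 'rV[int]_n.+1) (m : nat) :=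
  forall i j : 'I_n.+1, val j = (val i).+1 -> (val i < m)%N -> s 0 j = s 0 i ->
    exists l, v l = eZ i - eZ j.

Lemma tie_differences_belowS v m : tie_differences_below v m ->
  (forall i j : 'I_n.+1, val i = m -> val j = m.+1 -> s 0 j = s 0 i ->
     exists l, v l = eZ i - eZ j) ->
  tie_differences_below v m.+1.
Proof.
move=> below new i j ji; rewrite ltnS leq_eqVlt => /orP[/eqP im|]; last exact: below.
by apply: new; rewrite -?im.
Qed.

Lemma tie_difference_pairing (i1 j1 i j : 'I_n.+1) :
  val j1 = (val i1).+1 -> (val i1 < val i)%N -> val j = (val i).+1 ->
  dotZ (eZ i1 - eZ j1) (eZ j - eZ i) = (j1 == i)%:R.
Proof.
move=> j1i1 i1i ji; rewrite dotZ_eZ_diff.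
have neq (x y : 'I_n.+1) : val x != val y -> (x == y) = false.
  by rewrite -val_eqE; apply: negbTE.
rewrite (neq i1 i) ?(neq i1 j) ?(neq j1 j) ?subrr ?add0r // ?j1i1 ?ji; lia.
Qed.

Lemma tie_exchange v m (i j : 'I_n.+1) :
  obtuse_superbase L v -> tie_differences_below v m ->
  val i = m -> val j = m.+1 -> s 0 j = s 0 i ->
  exists2 w, obtuse_superbase L w &
    tie_differences_below w m /\ exists l, w l = eZ i - eZ j.
Proof.
move=> v_sb below im jm sji.
have ij : (i == j) = false by apply/negbTE; rewrite -val_eqE im jm; lia.
have [S xS] : exists S : {set 'I_n.+1}, eZ j - eZ i = \sum_(k in S) v k.
  apply: (norm2_subset_sum v_sb) => [y||]; first exact: orth_lattice_norm_neq1.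
    by rewrite unfold_in /= dotZBl !dotZ_eZl sji subrr.
  by rewrite dotZ_eZ_diff !eqxx ij eq_sym ij.
have u_norm2 : dotZ (\sum_(k in S) v k) (\sum_(k in S) v k) = 2.
  by rewrite -xS dotZ_eZ_diff !eqxx ij eq_sym ij.
(* eZ p - eZ i is the earlier tie difference that pairs to 1 with eZ j - eZ i;
   for m = 0 it is 0. *)
pose p : 'I_n.+1 := inord m.-1.
have p_val : val p = m.-1 by rewrite /= inordK //; move: (ltn_ord i) im => /=; lia.
have [s0 as0 vs0] :
    exists2 s0, 1 <= dotZ (v s0) (\sum_(k in S) v k) & v s0 != eZ p - eZ i.
  apply: (exists_pairing_ge1_avoid v_sb u_norm2).
  have pj : (p == j) = false by apply/negbTE; rewrite -val_eqE p_val jm; lia.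
  by rewrite -xS dotZ_eZ_diff pj ij !eqxx; case: (p == i); lia.
have [w [w_sb [l wl] w_v]] := superbase_exchange v_sb u_norm2 as0.
exists w => //; split; last by exists l; rewrite wl -xS opprB.
move=> i1 j1 j1i1 i1m sj1i1; have [l1 vl1] := below i1 j1 j1i1 i1m sj1i1.
have al1 : dotZ (v l1) (\sum_(k in S) v k) = (j1 == i)%:R.
  by rewrite -xS vl1 tie_difference_pairing // im.
exists l1; rewrite -vl1 w_v ?al1 //.
have [j1i|j1i] := eqVneq j1 i; last first.
  by apply: contraTneq as0 => <-; rewrite al1 (negbTE j1i).
have i1p : i1 = p by apply: val_inj; rewrite p_val; move: j1i1; rewrite j1i im => ->.
by apply: contraNneq vs0 => <-; rewrite vl1 j1i i1p.
Qed.

Lemma extend_tie_differences v m : obtuse_superbase L v -> tie_differences_below v m ->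
  exists2 w, obtuse_superbase L w & tie_differences_below w m.+1.
Proof.
move=> v_sb below.
have [/existsP[i /existsP[j /and3P[/eqP im /eqP jm /eqP sji]]]|none] :=
  boolP [exists i : 'I_n.+1, exists j : 'I_n.+1,
           [&& val i == m, val j == m.+1 & s 0 j == s 0 i]].
  have [w w_sb [below' [l wl]]] := tie_exchange v_sb below im jm sji.
  exists w => //; apply: tie_differences_belowS => // i1 j1 i1m j1m _.
  by exists l; rewrite wl; congr (eZ _ - eZ _); apply: val_inj; rewrite ?i1m ?j1m.
exists v => //; apply: tie_differences_belowS => // i1 j1 i1m j1m sj1i1.
by move/existsPn/(_ i1)/existsPn/(_ j1): none; rewrite i1m j1m sj1i1 !eqxx.
Qed.

End TieDifferences.

Theorem lemma4p7 (n : nat) (s : 'rV[int]_n.+1) :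
  changemaker s -> 2 <= s 0 ord_max ->
  (exists v : 'I_n.+1 -> 'rV[int]_n.+1, obtuse_superbase (orth_lattice s) v) ->
  exists (p : 'S_n.+1) (v : 'I_n.+1 -> 'rV[int]_n.+1),
    (forall i, s 0 (p i) = s 0 i) /\
    obtuse_superbase (orth_lattice s) v /\
    (forall i j : 'I_n.+1, val j = (val i).+1 -> s 0 j = s 0 i ->
       exists l, v l = eZ (p i) - eZ (p j)).
Proof.
move=> s_cm _ [v0 v0_sb].
have s_neq0 i : s 0 i != 0 by rewrite gt_eqF ?changemaker_gt0.
have ties_below m :
    exists2 v, obtuse_superbase (orth_lattice s) v & tie_differences_below s v m.
  by elim: m => [|m [v v_sb]]; [exists v0 | apply: extend_tie_differences].
have [v v_sb ties] := ties_below n.+1.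
exists 1%g, v; split=> [i|]; first by rewrite perm1.
by split=> // i j ji sji; rewrite !perm1; apply: ties ji (ltn_ord i) sji.
Qed.
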